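(* A locally connected metrizable space $X$ has a metrizable one-point connectification if and only if $X$ has no compact component.
   Context: A one-point connectification of a space $X$ is a connected space $Y$ which contains $X$ as a dense subspace and such that $Y\setminus X$ is a singleton. *)

From HB Require Import structures.
From mathcomp Require Import all_boot all_order all_algebra.
From mathcomp Require Import all_classical all_reals all_analysis.
From mathcomp Require Import Rstruct Rstruct_topology.
From Stdlib Require Import Rdefinitions.

Set Implicit Arguments.
Unset Strict Implicit.
Unset Printing Implicit Defensive.

Local Open Scope classical_set_scope.

Definition metric_compatible (T : topologicalType) (d : T -> T -> R) : Prop :=
  [/\ (forall x y : T, Rle 0%R (d x y)),
      (forall x y : T, d x y = 0%R <-> x = y),
      (forall x y : T, d x y = d y x),
      (forall x y z : T, Rle (d x z) (Rplus (d x y) (d y z))) &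
      (forall A : set T, open A <->
         (forall x, A x -> exists e : R, Rlt 0%R e /\
            (forall y, Rlt (d x y) e -> A y)))].

Definition metrizable (T : topologicalType) : Prop :=
  exists d : T -> T -> R, metric_compatible d.

Definition locally_connected (T : topologicalType) : Prop :=
  forall (x : T) (U : set T), open U -> U x ->
    exists V : set T, [/\ open V, V x, V `<=` U & connected V].

Definition embedding (X Y : topologicalType) (f : X -> Y) : Prop :=
  [/\ continuous f, injective f &
      (forall U : set X, open U ->
         exists V : set Y, open V /\ f @` U = V `&` range f)].

Definition one_point_connectification (X Y : topologicalType) (f : X -> Y) : Prop :=
  [/\ embedding f, connected [set: Y], dense (range f) &
      exists p : Y, ~` range f = [set p]].

From Stdlib Require Import Reals Lra.
From HB Require Import structures.
From mathcomp Require Import all_boot all_order all_algebra.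
From mathcomp Require Import all_classical all_reals all_analysis.
From mathcomp Require Import Rstruct Rstruct_topology.

(** Necessity: a component C of a locally connected space is open; if C were
compact, its image in a Hausdorff one-point connectification Y would be closed,
and open because X is open in Y (points are closed), hence all of the connected
space Y, which is absurd since it misses the added point.

Sufficiency: in a closed non-compact subset of a metric space there is a
sequence without cluster point.  Choosing such a sequence s_K in each component
K, the function phi x = inf_{K,n} (d(x, s_K(n)) + 1/(n+1)) is 1-Lipschitz,
positive (components are open and the s_K escape every point), and has
infimum 0 on each component.  Then D(x,y) = min(d(x,y), phi x + phi y) and
D(x,p) = phi x define a metric on X + {p} inducing the topology of X, in which
p lies in the closure of every component; so X + {p} is connected. *)

Set Implicit Arguments.
Unset Strict Implicit.
Unset Printing Implicit Defensive.

Local Open Scope classical_set_scope.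
Local Open Scope R_scope.

Definition dist_open (T : Type) (d : T -> T -> R) (A : set T) : Prop :=
  forall x, A x -> exists e, 0 < e /\ forall y, d x y < e -> A y.

Section metric_compatible_facts.
Variables (T : topologicalType) (d : T -> T -> R).
Hypothesis dP : metric_compatible d.

Lemma dist_ge0 x y : 0 <= d x y. Proof. by case: dP. Qed.

Lemma dist_eq0 x y : d x y = 0 <-> x = y. Proof. by case: dP. Qed.

Lemma dist_xx x : d x x = 0. Proof. exact/dist_eq0. Qed.

Lemma dist_gt0 x y : x <> y -> 0 < d x y.
Proof.
move=> xy; have [//|/esym/dist_eq0 //] := Rle_lt_or_eq_dec _ _ (dist_ge0 x y).
Qed.

Lemma distC x y : d x y = d y x. Proof. by case: dP. Qed.

Lemma dist_triangle x y z : d x z <= d x y + d y z. Proof. by case: dP. Qed.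

Lemma dist_openP A : open A <-> dist_open d A. Proof. by case: dP. Qed.

Lemma open_dist_ball x e : open [set y | d x y < e].
Proof.
apply/dist_openP => y /= xy; exists (e - d x y); split; first lra.
by move=> z yz; have := dist_triangle x y z; lra.
Qed.

Lemma nbhs_distP x A :
  nbhs x A <-> exists e, 0 < e /\ forall y, d x y < e -> A y.
Proof.
rewrite nbhsE; split=> [[B [/dist_openP oB Bx] BA]|[e [e0 eA]]].
  by have [e [e0 eB]] := oB x Bx; exists e; split=> // y /eB/BA.
exists [set y | d x y < e] => //; split; first exact: open_dist_ball.
by rewrite /= dist_xx.
Qed.

Lemma dist_hausdorff : hausdorff_space T.
Proof.
move=> x y clxy; apply: contrapT => /dist_gt0 xy.
have half_ball z : nbhs z [set w | d z w < d x y / 2].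
  by apply/nbhs_distP; exists (d x y / 2); split=> //; lra.
have [z [/= xz yz]] := clxy _ _ (half_ball x) (half_ball y).
by have := dist_triangle x z y; rewrite (distC z y); lra.
Qed.

End metric_compatible_facts.

Lemma locally_connected_component_open (X : topologicalType) (x : X) :
  locally_connected X -> open (connected_component [set: X] x).
Proof.
move=> lcX; rewrite openE => y cy.
have [V [oV Vy _ cV]] := lcX y setT openT I.
rewrite /interior nbhsE; exists V => //.
by rewrite (same_connected_component cy); exact: connected_component_max.
Qed.

Lemma connectification_no_compact_component (X Y : topologicalType) (f : X -> Y) :
  locally_connected X -> hausdorff_space Y -> one_point_connectification f ->
  ~ exists x, compact (connected_component [set: X] x).
Proof.
move=> lcX hsY [[fc _ fopen] Yconn _ [p fp]] [x cptC].
set C := connected_component [set: X] x.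
have [V [oV fCV]] := fopen C (locally_connected_component_open x lcX).
have open_range : open (range f).
  rewrite -[range f]setCK fp; apply: closed_openC.
  exact/accessible_closed_set1/hausdorff_accessible.
have fC_open : open (f @` C) by rewrite fCV; exact: openI.
have fC_closed : closed (f @` C).
  apply: (compact_closed hsY).
  exact: continuous_compact (continuous_subspaceT fc) cptC.
have fCT : f @` C = [set: Y].
  apply: Yconn; first by exists (f x), x => //; apply: connected_component_refl.
    by exists (f @` C); rewrite ?setTI.
  by exists (f @` C); rewrite ?setTI.
have : (~` range f) p by rewrite fp.
by apply; have [y _ <-] : (f @` C) p by rewrite fCT.
Qed.

Lemma inv_succ_gt0 n : 0 < / (INR n + 1).
Proof. by apply: Rinv_0_lt_compat; have := pos_INR n; lra. Qed.

Lemma inv_succ_le m n : (m <= n)%N -> / (INR n + 1) <= / (INR m + 1).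
Proof.
move=> /leP mn; apply: Rinv_le_contravar; first by have := pos_INR m; lra.
by have := le_INR _ _ mn; lra.
Qed.

Lemma inv_succ_lt e : 0 < e -> exists N, / (INR N + 1) < e.
Proof.
move=> e0; have [N [Ne N0]] := archimed_cor1 e e0; exists N.
apply: Rle_lt_trans Ne; apply: Rinv_le_contravar; last lra.
exact: lt_0_INR.
Qed.

Section sequences.
Variables (T : topologicalType) (d : T -> T -> R).

Definition cluster_seq (s : nat -> T) (x : T) :=
  forall e N, 0 < e -> exists2 n, (N <= n)%N & d x (s n) < e.

Definition escaping (s : nat -> T) :=
  forall x, exists e N, 0 < e /\ forall n, (N <= n)%N -> e <= d x (s n).

Lemma cluster_seq_of_not_escaping s : ~ escaping s -> exists x, cluster_seq s x.
Proof.
move=> sNesc; apply: contrapT => ncl; apply: sNesc => x.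
apply: contrapT => nx; apply: ncl; exists x => e N e0.
apply: contrapT => nn; apply: nx; exists e, N; split=> // n Nn.
by apply: Rnot_lt_le => xn; apply: nn; exists n.
Qed.

Hypothesis dP : metric_compatible d.

Lemma separated_not_cluster s e x : 0 < e ->
  (forall m n, (m < n)%N -> e <= d (s m) (s n)) -> ~ cluster_seq s x.
Proof.
move=> e0 sep clx.
have [m _ xm] := clx (e / 2) O ltac:(lra).
have [n mn xn] := clx (e / 2) m.+1 ltac:(lra).
have := sep m n mn; have := dist_triangle dP (s m) x (s n).
by rewrite (distC dP (s m) x); lra.
Qed.

Lemma separated_seq (C : set T) e :
  (forall l : seq T, (forall c, c \in l -> C c) ->
     exists2 x, C x & forall c, c \in l -> e <= d c x) ->
  exists s, (forall n, C (s n)) /\ forall m n, (m < n)%N -> e <= d (s m) (s n).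
Proof.
move=> far; have [//|x0 Cx0 _] := far [::].
pose P (l : seq T) x := C x /\
  ((forall c, c \in l -> C c) -> forall c, c \in l -> e <= d c x).
have /choice [next nextP] : forall l, exists x, P l x.
  move=> l; have [lC|nlC] := pselect (forall c, c \in l -> C c).
    by have [x Cx lx] := far l lC; exists x.
  by exists x0.
pose pts n := iter n (fun l => next l :: l) [::].
have ptsC n c : c \in pts n -> C c.
  elim: n c => [//|n IH] c; rewrite /= in_cons => /orP[/eqP->|/IH//].
  exact: (nextP _).1.
exists (fun n => next (pts n)); split=> [n|m n mn]; first exact: (nextP _).1.
apply: (nextP (pts n)).2; first exact: ptsC.
elim: n mn => [//|n IH]; rewrite ltnS leq_eqVlt => /orP[/eqP->|/IH mn].
  by rewrite /= mem_head.
by rewrite /= in_cons mn orbT.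
Qed.

Lemma cluster_seq_totally_bounded (C : set T) :
  (forall s, (forall n, C (s n)) -> exists x, cluster_seq s x) ->
  forall e, 0 < e -> exists l : seq T, (forall c, c \in l -> C c) /\
    forall x, C x -> exists2 c, c \in l & d c x < e.
Proof.
move=> clC e e0; apply: contrapT => ntb.
have [|s [sC sep]] := @separated_seq C e.
  move=> l lC; apply: contrapT => nfar; apply: ntb; exists l; split=> // x Cx.
  apply: contrapT => nx; apply: nfar; exists x => // c cl.
  by apply: Rnot_lt_le => cx; apply: nx; exists c.
have [x clx] := clC s sC.
exact: separated_not_cluster e0 sep clx.
Qed.

End sequences.

Lemma filter_meets_bigcup (T : Type) (I : eqType) (F : set_system T)
    (P : I -> set T) (l : seq I) : Filter F ->
  (forall B, F B -> \bigcup_(i in [set i | i \in l]) P i `&` B !=set0) ->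
  exists2 i, i \in l & forall B, F B -> P i `&` B !=set0.
Proof.
move=> FF; elim: l => [|i l IH] meet.
  by have [y [[j]]] := meet _ filterT.
have [iF|/existsNP[B0 /not_implyP[FB0 PB0]]] :=
  pselect (forall B, F B -> P i `&` B !=set0).
  by exists i; rewrite ?mem_head.
have [|j jl jF] := IH.
  move=> B FB; have [y [[j /= + Pjy] [By B0y]]] := meet _ (filterI FB FB0).
  rewrite in_cons => /orP[/eqP eji|jl]; last by exists y; split=> //; exists j.
  by subst j; case: PB0; exists y.
by exists j; rewrite // in_cons jl orbT.
Qed.

Section compact_of_cluster_seq.
Variables (T : topologicalType) (d : T -> T -> R).
Hypothesis dP : metric_compatible d.

Lemma compact_of_cluster_seq (C : set T) : closed C ->
  (forall s, (forall n, C (s n)) -> exists x, cluster_seq d s x) -> compact C.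
Proof.
move=> cC clC F FF FC.
have /choice[c cP] : forall n, exists c, C c /\
    forall B, F B -> [set y | d c y < / (INR n + 1)] `&` B !=set0.
  move=> n.
  have [l [lC lcov]] := cluster_seq_totally_bounded dP clC (inv_succ_gt0 n).
  have [|c cl cF] := filter_meets_bigcup
    (P := fun c => [set y | d c y < / (INR n + 1)]) (l := l) FF.
    move=> B FB; have [y [Cy By]] := filter_ex (filterI FC FB).
    by have [c cl cy] := lcov y Cy; exists y; split=> //; exists c.
  by exists c; split=> //; exact: lC.
have [x clx] := clC c (fun n => (cP n).1).
have Fx : cluster F x.
  move=> A B FA /(nbhs_distP dP) [e [e0 eB]].
  have e2 : 0 < e / 2 by lra.
  have [N Ne] := inv_succ_lt e2.
  have [n Nn xn] := clx (e / 2) N e2.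
  have [y [/= cy Ay]] := (cP n).2 A FA.
  exists y; split=> //; apply: eB.
  by have := inv_succ_le Nn; have := dist_triangle dP x (c n) y; lra.
exists x; split=> //; apply: cC => B xB.
by have [y [Cy By]] := Fx C B FC xB; exists y.
Qed.

Lemma noncompact_escaping_seq (C : set T) : closed C -> ~ compact C ->
  exists s, (forall n, C (s n)) /\ escaping d s.
Proof.
move=> cC nC; apply: contrapT => nesc; apply/nC/(compact_of_cluster_seq cC) => s sC.
by apply: cluster_seq_of_not_escaping => esc; apply: nesc; exists s.
Qed.

End compact_of_cluster_seq.

Section penalized_dist.
Variables (T : topologicalType) (d : T -> T -> R) (I : Type) (s : I -> nat -> T).

Definition penalized_dist (x : T) : R :=
  inf [set t | exists i n, t = d x (s i n) + / (INR n + 1)].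

Hypothesis dP : metric_compatible d.
Variable i0 : I.

Lemma penalized_dist_le x i n : penalized_dist x <= d x (s i n) + / (INR n + 1).
Proof.
apply/RleP/ge_inf; last by exists i, n.
exists 0 => _ [j [m ->]]; apply/RleP.
by have := dist_ge0 dP x (s j m); have := inv_succ_gt0 m; lra.
Qed.

Lemma penalized_dist_ge x m :
  (forall i n, m <= d x (s i n) + / (INR n + 1)) -> m <= penalized_dist x.
Proof.
move=> lbm; apply/RleP/lb_le_inf => [|_ [i [n ->]]]; last exact/RleP.
by exists (d x (s i0 0%N) + / (INR 0 + 1)), i0, 0%N.
Qed.

Lemma penalized_dist_seq i n : penalized_dist (s i n) <= / (INR n + 1).
Proof. by have := penalized_dist_le (s i n) i n; rewrite (dist_xx dP); lra. Qed.

Lemma penalized_dist_lipschitz x y : penalized_dist x <= d x y + penalized_dist y.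
Proof.
suff : penalized_dist x - d x y <= penalized_dist y by lra.
apply: penalized_dist_ge => i n; have := penalized_dist_le x i n.
by have := dist_triangle dP x y (s i n); lra.
Qed.

End penalized_dist.

Section component_gauge.
Variables (X : topologicalType) (d : X -> X -> R).
Hypotheses (dP : metric_compatible d) (lcX : locally_connected X).
Local Notation comp x := (connected_component [set: X] x).

Section escaping_family.
Variable s : X -> nat -> X.
Hypotheses (s_comp : forall x n, comp x (s x n))
  (s_escaping : forall x, escaping d (s x))
  (s_const : forall x y, comp x y -> s x = s y).

Lemma penalized_dist_gt0 x : 0 < penalized_dist d s x.
Proof.
have [eps [eps0 ball_comp]] := iffLR (dist_openP dP _)
  (locally_connected_component_open x lcX) x (@connected_component_refl _ setT x I).
have [e [N [e0 far]]] := s_escaping x x.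
pose m := Rmin eps (Rmin e (/ (INR N + 1))).
have m_eps : m <= eps := Rmin_l _ _.
have m_e : m <= e := Rle_trans _ _ _ (Rmin_r _ _) (Rmin_l _ _).
have m_N : m <= / (INR N + 1) := Rle_trans _ _ _ (Rmin_r _ _) (Rmin_r _ _).
have m0 : 0 < m by apply: Rmin_pos => //; apply: Rmin_pos => //; exact: inv_succ_gt0.
apply: (Rlt_le_trans _ _ _ m0); apply: (penalized_dist_ge x) => y n.
have := inv_succ_gt0 n; have := dist_ge0 dP x (s y n).
have [|near] := Rle_lt_dec eps (d x (s y n)); first lra.
have -> : s y = s x.
  apply/esym/s_const/(connected_component_trans (ball_comp _ near)).
  exact/connected_component_sym/s_comp.
by have [/far|/ltnW/inv_succ_le] := leqP N n; lra.
Qed.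

End escaping_family.

Lemma escaping_component_seqs (x0 : X) : ~ (exists x, compact (comp x)) ->
  exists s : X -> nat -> X, [/\ forall x n, comp x (s x n),
    forall x, escaping d (s x) & forall x y, comp x y -> s x = s y].
Proof.
move=> noncompact.
have /choice[pick pickP] : forall K : set X, exists s : nat -> X,
    (exists x, K = comp x) -> (forall n, K (s n)) /\ escaping d s.
  move=> K; have [[x ->]|nK] := pselect (exists x, K = comp x); last first.
    by exists (fun=> x0).
  have [|s sP] := noncompact_escaping_seq dP (component_closed (x := x) closedT).
    by move=> cpt; apply: noncompact; exists x.
  by exists s.
exists (fun x => pick (comp x)); split.
- by move=> x n; have [] := pickP (comp x) (ex_intro _ x erefl).
- by move=> x; have [] := pickP (comp x) (ex_intro _ x erefl).
- by move=> x y /same_connected_component ->.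
Qed.

Lemma component_gauge (x0 : X) : ~ (exists x, compact (comp x)) ->
  exists phi : X -> R, [/\ forall x, 0 < phi x,
    forall x y, phi x <= d x y + phi y &
    forall x e, 0 < e -> exists2 z, comp x z & phi z < e].
Proof.
move=> noncompact.
have [s [s_comp s_esc s_const]] := escaping_component_seqs x0 noncompact.
exists (penalized_dist d s); split.
- exact: penalized_dist_gt0.
- exact: penalized_dist_lipschitz s dP x0.
- move=> x e e0; have [N Ne] := inv_succ_lt e0; exists (s x N) => //.
  by have := penalized_dist_seq s dP x N; lra.
Qed.

End component_gauge.

Definition dist_topology (T : choiceType) (D : T -> T -> R) : Type := T.

HB.instance Definition _ (T : choiceType) (D : T -> T -> R) :=
  Choice.on (dist_topology D).

Section dist_topology.
Variables (T : choiceType) (D : T -> T -> R).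

Lemma dist_openT : dist_open D setT.
Proof. by move=> x _; exists 1; split=> //; exact: Rlt_0_1. Qed.

Lemma dist_openI : setI_closed (dist_open D).
Proof.
move=> A B oA oB x [Ax Bx].
have [e1 [e1_gt0 e1A]] := oA x Ax; have [e2 [e2_gt0 e2B]] := oB x Bx.
exists (Rmin e1 e2); split; first exact: Rmin_pos.
move=> y xy; split; [apply: e1A | apply: e2B].
- exact: Rlt_le_trans xy (Rmin_l _ _).
- exact: Rlt_le_trans xy (Rmin_r _ _).
Qed.

Lemma dist_open_bigcup (I : Type) (f : I -> set T) :
  (forall i, dist_open D (f i)) -> dist_open D (\bigcup_i f i).
Proof.
move=> f_open x [i _ fi_x]; have [e [e0 ef]] := f_open i x fi_x.
by exists e; split=> // y /ef fiy; exists i.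
Qed.

End dist_topology.

HB.instance Definition _ (T : choiceType) (D : T -> T -> R) :=
  isOpenTopological.Build (dist_topology D)
    (dist_openT D) (@dist_openI T D) (@dist_open_bigcup T D).

Lemma dist_topology_openE (T : choiceType) (D : T -> T -> R)
  (A : set (dist_topology D)) : open A = dist_open D A.
Proof. reflexivity. Qed.

Section one_point_extension.
Variables (T : topologicalType) (d : T -> T -> R) (phi : T -> R).
Hypotheses (dP : metric_compatible d) (phi_gt0 : forall x, 0 < phi x)
  (phi_lip : forall x y, phi x <= d x y + phi y).

Definition ext_dist (a b : option T) : R :=
  match a, b with
  | Some x, Some y => Rmin (d x y) (phi x + phi y)
  | _, _ => oapp phi 0 a + oapp phi 0 b
  end.

Definition ext_space : topologicalType := dist_topology ext_dist.

Definition ext_point (x : T) : ext_space := Some x.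

Lemma ext_gauge_ge0 a : 0 <= oapp phi 0 a.
Proof. by case: a => [x|] /=; [exact/Rlt_le | exact: Rle_refl]. Qed.

Lemma ext_dist_le_gauge a b : ext_dist a b <= oapp phi 0 a + oapp phi 0 b.
Proof. by case: a b => [x|] [y|]; [exact: Rmin_r | exact: Rle_refl ..]. Qed.

Lemma ext_dist_cases a b : ext_dist a b = oapp phi 0 a + oapp phi 0 b \/
  exists x y, [/\ a = Some x, b = Some y & ext_dist a b = d x y].
Proof.
case: a b => [x|] [y|]; try by left.
have [xy|yx] := Rle_or_lt (d x y) (phi x + phi y).
  by right; exists x, y; split=> //; exact: Rmin_left.
by left; apply: Rmin_right; lra.
Qed.

Lemma ext_gauge_lipschitz a b : oapp phi 0 a <= ext_dist a b + oapp phi 0 b.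
Proof.
have [->|[x [y [-> -> ->]]]] := ext_dist_cases a b; last exact: phi_lip.
by have := ext_gauge_ge0 b; lra.
Qed.

Lemma ext_distC a b : ext_dist a b = ext_dist b a.
Proof.
case: a b => [x|] [y|] /=; last by [].
- by rewrite (distC dP x y) (Rplus_comm (phi x)).
- exact: Rplus_comm.
- exact: Rplus_comm.
Qed.

Lemma ext_dist_triangle a b c : ext_dist a c <= ext_dist a b + ext_dist b c.
Proof.
have [->|[x [y [-> -> Dxy]]]] := ext_dist_cases a b.
  have := ext_dist_le_gauge a c; have := ext_gauge_lipschitz c b.
  by rewrite (ext_distC c b); lra.
have [->|[_ [z [[<-] -> Dyz]]]] := ext_dist_cases (Some y) c.
  have := ext_dist_le_gauge (Some x) c.
  have := ext_gauge_lipschitz (Some x) (Some y).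
  by rewrite Dxy /=; lra.
rewrite Dxy Dyz /=; have := Rmin_l (d x z) (phi x + phi z).
by have := dist_triangle dP x y z; lra.
Qed.

Lemma ext_dist_metric : metric_compatible (T := ext_space) ext_dist.
Proof.
split.
- move=> a b; have [->|[x [y [_ _ ->]]]] := ext_dist_cases a b.
    by have := ext_gauge_ge0 a; have := ext_gauge_ge0 b; lra.
  exact: dist_ge0 dP x y.
- move=> a b; split=> [|<-]; last first.
    case: a => [x|] /=; last lra.
    by rewrite (dist_xx dP); apply: Rmin_left; have := phi_gt0 x; lra.
  have [->|[x [y [-> -> ->]]]] := ext_dist_cases a b; last by move/(dist_eq0 dP) ->.
  case: a b => [x|] [y|] //=; try (have := phi_gt0 x); try (have := phi_gt0 y); lra.
- exact: ext_distC.
- exact: ext_dist_triangle.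
- by move=> A; rewrite dist_topology_openE.
Qed.

Lemma ext_point_continuous : continuous ext_point.
Proof.
apply/continuousP => A oA; apply/(dist_openP dP) => x /= Ax.
have [e [e0 eA]] := oA (Some x) Ax.
exists e; split=> // y xy; apply: eA => /=.
by have := Rmin_l (d x y) (phi x + phi y); lra.
Qed.

Lemma ext_point_open (U : set T) : open U -> open (ext_point @` U).
Proof.
move=> /(dist_openP dP) oU; rewrite dist_topology_openE => _ [x Ux <-].
have [e [e0 eU]] := oU x Ux.
exists (Rmin e (phi x)); split; first exact: Rmin_pos.
have := Rmin_l e (phi x); have := Rmin_r e (phi x) => ? ? b.
have [->|[_ [y [[<-] -> ->]]]] := ext_dist_cases (ext_point x) b.
  by have := ext_gauge_ge0 b => /=; lra.
by move=> xy; exists y => //; apply: eU; lra.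
Qed.

Lemma ext_point_embedding : embedding ext_point.
Proof.
split; [exact: ext_point_continuous | by move=> x y [] | move=> U oU].
exists (ext_point @` U); split; first exact: ext_point_open.
by rewrite setIidl // => _ [x _ <-]; exists x.
Qed.

Lemma ext_point_range : ~` range ext_point = [set None].
Proof.
apply/seteqP; split=> [[y|] nry|_ -> [y _ //]] //=.
by case: nry; exists y.
Qed.

Lemma closure_ext_point_None (A : set T) :
  (forall e, 0 < e -> exists2 z, A z & phi z < e) ->
  closure (ext_point @` A) (None : ext_space).
Proof.
move=> small B /(nbhs_distP ext_dist_metric) [e [e0 eB]].
have [z Az ze] := small e e0.
by exists (ext_point z); split; [exists z | apply: eB => /=; lra].
Qed.

Variable x0 : T.
Hypothesis phi_small :
  forall x e, 0 < e -> exists2 z, connected_component [set: T] x z & phi z < e.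

Lemma ext_space_connected : connected [set: ext_space].
Proof.
suff -> : [set: ext_space] =
    \bigcup_(x in [set: T]) closure (ext_point @` connected_component [set: T] x).
  apply: bigcup_connected.
    by exists None => x _; exact: closure_ext_point_None (phi_small x).
  move=> x _; apply/connected_closure/connected_continuous_connected.
    exact: component_connected.
  exact/continuous_subspaceT/ext_point_continuous.
apply/seteqP; split=> // -[y|] _; last first.
  by exists x0 => //; exact: closure_ext_point_None (phi_small x0).
exists y => //; apply/subset_closure; exists y => //.
exact: connected_component_refl.
Qed.

Lemma ext_point_dense : dense (range ext_point).
Proof.
move=> O [[x|] Ox] oO; first by exists (Some x); split=> //; exists x.
have [_ [[y _ <-] Oy]] :=
  closure_ext_point_None (phi_small x0) (open_nbhs_nbhs (conj oO Ox)).
by exists (ext_point y); split=> //; exists y.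
Qed.

Lemma ext_one_point_connectification : one_point_connectification ext_point.
Proof.
split; [exact: ext_point_embedding | exact: ext_space_connected |
        exact: ext_point_dense | by exists None; exact: ext_point_range].
Qed.

End one_point_extension.

Theorem theorem2p6 (X : topologicalType) :
  [set: X] !=set0 ->
  locally_connected X -> metrizable X ->
  ((exists (Y : topologicalType) (f : X -> Y),
       one_point_connectification f /\ metrizable Y)
   <-> ~ (exists x : X, compact (connected_component [set: X] x))).
Proof.
move=> [x0 _] lcX [d dP]; split.
  move=> [Y [f [opc [dY dYP]]]].
  exact: connectification_no_compact_component lcX (dist_hausdorff dYP) opc.
move=> noncompact.
have [phi [phi_gt0 phi_lip phi_small]] := component_gauge dP lcX x0 noncompact.
exists (ext_space d phi), (ext_point d phi); split.
  exact: ext_one_point_connectification dP phi_gt0 phi_lip x0 phi_small.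
by exists (ext_dist d phi); exact: ext_dist_metric.
Qed.
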